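(* Let $A$ be a real $m\times m$ matrix, $f_\delta\in\mathbb{R}^m$, $q\in(0,1)$, $\alpha_0>0$, and define $G_0=0$, $G_n=qG_{n-1}+(1-q)\alpha_0q^n\|Q_{\alpha_0q^n}^{-1}f_\delta\|$ for $n\ge1$. Let $D_n:=\alpha_0q^{n+1}\|Q_{\alpha_0q^{n+1}}^{-1}f_\delta\|-G_n$, so that $G_{n+1}-G_n=(1-q)D_n$. If $D_{n_c}<0$ for some integer $n_c\ge1$ (equivalently $G_{n_c+1}<G_{n_c}$), then $D_n<0$ for all $n\ge n_c$; consequently $G_{n+1}<G_n$ for all $n\ge n_c$.
   Context: $A^*$ is the transpose of $A$, $Q:=AA^*$, $Q_a:=Q+aI$ for $a>0$; $\|\cdot\|$ is the Euclidean norm. *)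

From HB Require Import structures.
From mathcomp Require Import all_boot all_order all_algebra.
Set Implicit Arguments. Unset Strict Implicit. Unset Printing Implicit Defensive.
Import Order.TTheory GRing.Theory Num.Theory.
Local Open Scope ring_scope.

Definition enorm (R : rcfType) (m : nat) (v : 'cV[R]_m) : R :=
  Num.sqrt (\sum_(i < m) v i ord0 ^+ 2).

Definition Qmx (R : rcfType) (m : nat) (A : 'M[R]_m) : 'M[R]_m := A *m A^T.
Definition Qa (R : rcfType) (m : nat) (A : 'M[R]_m) (a : R) : 'M[R]_m :=
  Qmx A + a%:M.

Definition phi (R : rcfType) (m : nat) (A : 'M[R]_m) (f : 'cV[R]_m)
  (q alpha0 : R) (n : nat) : R :=
  alpha0 * q ^+ n * enorm (invmx (Qa A (alpha0 * q ^+ n)) *m f).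

Fixpoint Gseq (R : rcfType) (m : nat) (A : 'M[R]_m) (f : 'cV[R]_m)
  (q alpha0 : R) (n : nat) : R :=
  match n with
  | 0 => 0
  | n'.+1 => q * Gseq A f q alpha0 n' + (1 - q) * phi A f q alpha0 n'.+1
  end.

Definition Dseq (R : rcfType) (m : nat) (A : 'M[R]_m) (f : 'cV[R]_m)
  (q alpha0 : R) (n : nat) : R :=
  phi A f q alpha0 n.+1 - Gseq A f q alpha0 n.

(* Writing D_{n+1} = q D_n + (phi_{n+2} - phi_{n+1}), negativity of D
   propagates as soon as phi_n = a_n ||Q_{a_n}^{-1} f|| is nonincreasing
   along the decreasing parameters a_n = alpha0 q^n.  That monotonicity
   comes from the positive semidefiniteness of Q: with x = Q_a^{-1} f and
   y = Q_b^{-1} f one has Q (x - y) = b y - a x, so <x - y, b y - a x> >= 0,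
   which together with ||a x - b y||^2 >= 0 forces ||b y|| <= ||a x|| for
   b < a. *)
From HB Require Import structures.
From mathcomp Require Import all_boot all_order all_algebra ring lra.
Set Implicit Arguments. Unset Strict Implicit. Unset Printing Implicit Defensive.
Import Order.TTheory GRing.Theory Num.Theory.
Local Open Scope ring_scope.

Section InnerProduct.
Variables (R : rcfType) (m : nat).
Implicit Types (u v w : 'cV[R]_m) (A : 'M[R]_m).

Definition dotmx u v : R := (u^T *m v) ord0 ord0.

Lemma dotmxC u v : dotmx u v = dotmx v u.
Proof. by rewrite /dotmx !mxE; apply: eq_bigr => i _; rewrite !mxE mulrC. Qed.

Lemma dotmxDr u v w : dotmx u (v + w) = dotmx u v + dotmx u w.
Proof. by rewrite /dotmx mulmxDr !mxE. Qed.

Lemma dotmxBr u v w : dotmx u (v - w) = dotmx u v - dotmx u w.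
Proof. by rewrite /dotmx mulmxBr !mxE. Qed.

Lemma dotmxZr c u v : dotmx u (c *: v) = c * dotmx u v.
Proof. by rewrite /dotmx -scalemxAr !mxE. Qed.

Lemma dotmxBl u v w : dotmx (u - v) w = dotmx u w - dotmx v w.
Proof. by rewrite !(dotmxC _ w) dotmxBr. Qed.

Lemma dotmxZl c u v : dotmx (c *: u) v = c * dotmx u v.
Proof. by rewrite !(dotmxC _ v) dotmxZr. Qed.

Lemma dotmxE u : dotmx u u = \sum_(i < m) u i ord0 ^+ 2.
Proof. by rewrite /dotmx mxE; apply: eq_bigr => i _; rewrite mxE expr2. Qed.

Lemma dotmx_ge0 u : 0 <= dotmx u u.
Proof. by rewrite dotmxE sumr_ge0 // => i _; rewrite sqr_ge0. Qed.

Lemma dotmx_eq0 u : dotmx u u = 0 -> u = 0.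
Proof.
rewrite dotmxE => /psumr_eq0P u0; apply/matrixP => i j.
rewrite ord1 mxE; apply/eqP; rewrite -sqrf_eq0 u0 //.
by move=> k _; rewrite sqr_ge0.
Qed.

Lemma enorm_dotmx u : enorm u = Num.sqrt (dotmx u u).
Proof. by rewrite dotmxE. Qed.

Lemma enormZ c u : 0 <= c -> c * enorm u = Num.sqrt (dotmx (c *: u) (c *: u)).
Proof.
move=> c_ge0; rewrite enorm_dotmx dotmxZl dotmxZr mulrA -expr2.
by rewrite sqrtrM ?sqr_ge0 // sqrtr_sqr ger0_norm.
Qed.

Lemma dotmx_Qmx_ge0 A w : 0 <= dotmx w (Qmx A *m w).
Proof.
have -> : dotmx w (Qmx A *m w) = dotmx (A^T *m w) (A^T *m w).
  by rewrite /dotmx /Qmx trmx_mul trmxK !mulmxA.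
exact: dotmx_ge0.
Qed.

Lemma mulmx_Qa A a w : Qa A a *m w = Qmx A *m w + a *: w.
Proof. by rewrite /Qa mulmxDl mul_scalar_mx. Qed.

Lemma trmx_Qa A a : (Qa A a)^T = Qa A a.
Proof. by rewrite /Qa /Qmx linearD /= tr_scalar_mx trmx_mul trmxK. Qed.

Lemma Qa_mulmx_eq0 A a w : 0 < a -> Qa A a *m w = 0 -> w = 0.
Proof.
move=> a_gt0 Qaw0; apply: dotmx_eq0; apply/eqP.
have : dotmx w (Qa A a *m w) == 0 by rewrite Qaw0 /dotmx mulmx0 mxE.
rewrite mulmx_Qa dotmxDr dotmxZr paddr_eq0 ?dotmx_Qmx_ge0 ?mulr_ge0 ?dotmx_ge0 ?ltW //.
by case/andP=> _; rewrite mulf_eq0 gt_eqF.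
Qed.

Lemma Qa_unitmx A a : 0 < a -> Qa A a \in unitmx.
Proof.
move=> a_gt0; rewrite -row_free_unit; apply: inj_row_free => v vQa0.
apply: trmx_inj; rewrite trmx0; apply: (Qa_mulmx_eq0 (A := A) a_gt0).
by rewrite -trmx_Qa -trmx_mul vQa0 trmx0.
Qed.

Lemma scaled_resolvent_norm_le A f a b : 0 < b -> b < a ->
  b * enorm (invmx (Qa A b) *m f) <= a * enorm (invmx (Qa A a) *m f).
Proof.
move=> b_gt0 b_lt_a; have a_gt0 : 0 < a by exact: lt_trans b_lt_a.
set x := invmx (Qa A a) *m f; set y := invmx (Qa A b) *m f.
have Qmx_resolvent c z : 0 < c -> z = invmx (Qa A c) *m f ->
    Qmx A *m z = f - c *: z.
  by move=> c_gt0 ->; rewrite -{2}[f](mulKVmx (Qa_unitmx A c_gt0)) mulmx_Qa addrK.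
set u := a *: x; set v := b *: y.
have Qmx_diff : Qmx A *m (x - y) = v - u.
  by rewrite mulmxBr (Qmx_resolvent a) // (Qmx_resolvent b) // opprB addrC addrA addrNK.
have cross_ge0 : 0 <= dotmx (b *: u - a *: v) (v - u).
  have -> : b *: u - a *: v = (a * b) *: (x - y).
    by rewrite /u /v !scalerA scalerBr [b * a]mulrC.
  by rewrite dotmxZl -Qmx_diff mulr_ge0 ?dotmx_Qmx_ge0 // mulr_ge0 ?ltW.
have diff_ge0 := dotmx_ge0 (u - v).
rewrite enormZ ?(ltW b_gt0) // enormZ ?(ltW a_gt0) // -/u -/v.
rewrite (ler_sqrt (dotmx v v) (dotmx_ge0 u)).
(* (a - b) (<u,u> - <v,v>) = 2 cross_ge0 + (a + b) diff_ge0 *)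
clearbody u v; move: cross_ge0 diff_ge0.
rewrite !dotmxBl !dotmxZl !dotmxBr [dotmx v u]dotmxC.
move=> *; nra.
Qed.

End InnerProduct.

Section Sequences.
Variables (R : rcfType) (m : nat) (A : 'M[R]_m) (f : 'cV[R]_m) (q alpha0 : R).
Local Notation G := (Gseq A f q alpha0).
Local Notation D := (Dseq A f q alpha0).
Local Notation phi := (phi A f q alpha0).

Lemma GseqS n : G n.+1 = G n + (1 - q) * D n.
Proof. by rewrite /Dseq /=; ring. Qed.

Lemma DseqS n : D n.+1 = q * D n + (phi n.+2 - phi n.+1).
Proof. by rewrite /Dseq GseqS /Dseq; ring. Qed.

Hypotheses (q_gt0 : 0 < q) (q_lt1 : q < 1) (alpha0_gt0 : 0 < alpha0).

Lemma phiS_le n : phi n.+1 <= phi n.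
Proof.
have an_gt0 : 0 < alpha0 * q ^+ n by rewrite mulr_gt0 // exprn_gt0.
apply: scaled_resolvent_norm_le; first by rewrite exprS mulrCA mulr_gt0.
by rewrite exprSr mulrA gtr_pMr.
Qed.

Lemma Dseq_lt0_from nc n : D nc < 0 -> (nc <= n)%N -> D n < 0.
Proof.
move=> Dnc_lt0; elim: n => [|n IHn]; first by rewrite leqn0 => /eqP <-.
rewrite leq_eqVlt ltnS => /orP[/eqP <- // | nc_le_n].
rewrite DseqS -(addr0 0) ltr_leD ?pmulr_rlt0 ?IHn //.
by rewrite subr_le0 phiS_le.
Qed.

End Sequences.

Theorem lemma2p5 (R : rcfType) (m : nat) (A : 'M[R]_m) (f : 'cV[R]_m)
  (q alpha0 : R) (hq0 : 0 < q) (hq1 : q < 1) (ha : 0 < alpha0)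
  (nc : nat) (hnc : (1 <= nc)%N) (hD : Dseq A f q alpha0 nc < 0) :
  forall n : nat, (nc <= n)%N ->
    Dseq A f q alpha0 n < 0 /\ Gseq A f q alpha0 n.+1 < Gseq A f q alpha0 n.
Proof.
move=> n nc_le_n; have Dn_lt0 := Dseq_lt0_from hq0 hq1 ha hD nc_le_n.
split=> //; by rewrite GseqS gtrDl pmulr_rlt0 ?subr_gt0.
Qed.
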